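(* Let $\mathcal F$ be a saturated fusion system over a finite $p$-group $S$, $R$ a commutative ring with $1$, $H\le K\le S$, and $\mathcal H$, $\mathcal K$ fusion systems over $H$ and $K$ respectively with $\mathcal H\subseteq\mathcal K\subseteq\mathcal F$. Then: (1) the restriction functor $\downarrow^{\mathcal K}_{\mathcal H}$ maps $\operatorname{Mack}^{\mathcal F}_R(\mathcal K)$ into $\operatorname{Mack}^{\mathcal F}_R(\mathcal H)$; in particular $\downarrow^{\mathcal F}_{\mathcal H}$ maps $\operatorname{Mack}^c_R(\mathcal F)$ into $\operatorname{Mack}^{\mathcal F}_R(\mathcal H)$; (2) the induction functor $\uparrow^{\mathcal K}_{\mathcal H}$ maps $\operatorname{Mack}^{\mathcal F}_R(\mathcal H)$ into $\operatorname{Mack}^{\mathcal F}_R(\mathcal K)$; in particular $\uparrow^{\mathcal F}_{\mathcal H}$ maps $\operatorname{Mack}^{\mathcal F}_R(\mathcal H)$ into $\operatorname{Mack}^c_R(\mathcal F)$; (3) for every isomorphism $\varphi:H\to\varphi(H)$ in $\mathcal F$, the conjugation functor ${}^{\varphi}(\cdot)$ maps $\operatorname{Mack}^{\mathcal F}_R(\mathcal F_H(H))$ into $\operatorname{Mack}^{\mathcal F}_R(\mathcal F_{\varphi(H)}(\varphi(H)))$.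
   Context: Fusion systems over $S$: objects the subgroups of $S$, morphisms injective homomorphisms including all conjugations by elements of $S$, each morphism's isomorphism onto its image and its inverse belonging to the system; $\mathcal F$ saturated. $P\le S$ is $\mathcal F$-centric if $C_S(P')\le P'$ for all $P'$ isomorphic to $P$ in $\mathcal F$. $\mathcal F_H(H)$: fusion system over $H$ whose morphisms are conjugations by elements of $H$. Mackey algebra: for $A\le B\le S$, $R^B_A$, $I^B_A$ are the isomorphism classes of the bisets $(A\times B)/\Delta(A)$, $(B\times A)/\Delta(A)$, and for an isomorphism $\psi:A\to\psi(A)$ in $\mathcal F$, $c_\psi$ is the class of $(\psi(A)\times A)/\{(\psi(a),a)\}$; classes are multiplied via $\times_J$ over a common middle group ($0$ otherwise), $\mu_{\mathbb Z}(\mathcal F)$ is the Grothendieck group of the semiring (addition = disjoint union) they generate and $\mu_R(\mathcal F)=R\otimes\mu_{\mathbb Z}(\mathcal F)$. For a fusion system $\mathcal E\subseteq\mathcal F$ over $E\le S$, $\mu_R(\mathcal E)$ (built from $\mathcal E$) is a subring of $\mu_R(\mathcal F)$ with unit $1_{\mathcal E}=\sum_{A\le E}I^A_A$. A Mackey functor over $\mathcal E$ on $R$ is a finitely generated left $\mu_R(\mathcal E)$-module. For $\mathcal H\subseteq\mathcal K$: $M\downarrow^{\mathcal K}_{\mathcal H}=1_{\mathcal H}M$, $N\uparrow^{\mathcal K}_{\mathcal H}=\mu_R(\mathcal K)1_{\mathcal H}\otimes_{\mu_R(\mathcal H)}N$. $M$ over $\mathcal E$ is $\mathcal F$-centric if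 $I^A_AM=0$ for every $A\le E$ that is not $\mathcal F$-centric; $\operatorname{Mack}^{\mathcal F}_R(\mathcal E)$ denotes the full subcategory of these and $\operatorname{Mack}^c_R(\mathcal F)=\operatorname{Mack}^{\mathcal F}_R(\mathcal F)$. Conjugation functor: a group isomorphism $\varphi:H\to K'$ induces an $R$-algebra isomorphism $\hat\varphi:\mu_R(\mathcal F_H(H))\to\mu_R(\mathcal F_{K'}(K'))$ with $\hat\varphi(I^B_{hCh^{-1}}c_{c_h}R^A_C)=I^{\varphi(B)}_{\varphi(h)\varphi(C)\varphi(h)^{-1}}c_{c_{\varphi(h)}}R^{\varphi(A)}_{\varphi(C)}$ ($C\le A\le H$, $hCh^{-1}\le B\le H$). For a Mackey functor $L$ over $\mathcal F_H(H)$, ${}^{\varphi}L$ is the Mackey functor over $\mathcal F_{K'}(K')$ equal to $L$ as an $R$-module, with $y\cdot x:=\hat\varphi^{-1}(y)x$. *)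

From HB Require Import structures.
From mathcomp Require Import all_boot all_order all_algebra all_fingroup all_solvable.
Set Implicit Arguments. Unset Strict Implicit. Unset Printing Implicit Defensive.
Import GRing.Theory.
Local Open Scope group_scope.

(* Morphisms.  A morphism with domain P is encoded as a finite function
   gT -> gT which is 1 outside P (so that each homomorphism P -> S has a
   unique code); its codomain is not recorded.                          *)
Notation mor gT := {ffun gT -> gT} (only parsing).

Definition restr (gT : finGroupType) (P : {set gT}) (g : gT -> gT) : mor gT :=
  [ffun x => if x \in P then g x else 1].

(* c_g restricted to P : x |-> g x g^-1 *)
Definition cmap (gT : finGroupType) (P : {set gT}) (g : gT) : mor gT :=
  restr P (fun x => x ^ g^-1).

Definition minv (gT : finGroupType) (P : {set gT}) (f : mor gT) : mor gT :=
  restr (f @: P) (fun y => odflt 1 [pick x in P | f x == y]).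

Definition img (gT : finGroupType) (f : mor gT) (P : {set gT}) : {group gT} :=
  [group of <<f @: P>>].

Definition is_mor (gT : finGroupType) (E P : {set gT}) (f : mor gT) : Prop :=
  [/\ P \subset E, f = restr P f, {in P &, {morph f : x y / x * y}},
      {in P &, injective f} & f @: P \subset E].

(* A (candidate) fusion system: F P f <-> f is a morphism of F with domain P. *)
Definition fsys (gT : finGroupType) := {group gT} -> mor gT -> bool.

Definition fusion_system (gT : finGroupType) (E : {group gT}) (F : fsys gT) : Prop :=
  [/\ (forall P f, F P f -> is_mor E P f),
      (forall (P : {group gT}) g, P \subset E -> g \in E -> F P (cmap P g)),
      (forall P f, F P f -> F (img f P) (minv P f)) &
      (forall (P Q : {group gT}) f g, F P f -> F Q g -> f @: P \subset Q ->
          F P (restr P (g \o f)))].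

Definition subfs (gT : finGroupType) (F1 F2 : fsys gT) : Prop :=
  forall P f, F1 P f -> F2 P f.

Definition group_fs (gT : finGroupType) (H : {group gT}) : fsys gT :=
  fun P f => (P \subset H) && [exists h in H, f == cmap P h].

Definition AutF (gT : finGroupType) (F : fsys gT) (P : {group gT}) : {set mor gT} :=
  [set f | F P f & f @: P == P].

Definition AutS (gT : finGroupType) (S P : {group gT}) : {set mor gT} :=
  [set cmap P g | g in 'N_S(P)].

(* Aut_S(P) is a Sylow p-subgroup of Aut_F(P) (index prime to p) *)
Definition fully_automized (gT : finGroupType) (p : nat) (S : {group gT})
    (F : fsys gT) (P : {group gT}) : bool :=
  ~~ (p %| #|AutF F P| %/ #|AutS S P|).

Definition Nphi (gT : finGroupType) (S P : {group gT}) (f : mor gT) : {group gT} :=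
  <<[set g in 'N_S(P) |
      restr (img f P) (f \o (fun x => x ^ g^-1) \o minv P f) \in AutS S (img f P)]>>%G.

Definition receptive (gT : finGroupType) (S : {group gT}) (F : fsys gT) (Q : {group gT}) :
    Prop :=
  forall (P : {group gT}) f, F P f -> f @: P = Q :> {set gT} ->
    exists g, F (Nphi S P f) g /\ {in P, g =1 f}.

Definition saturated (gT : finGroupType) (p : nat) (S : {group gT}) (F : fsys gT) : Prop :=
  forall P : {group gT}, P \subset S ->
    exists (Q : {group gT}) f,
      [/\ F P f, f @: P = Q :> {set gT}, fully_automized p S F Q & receptive S F Q].

Definition centric (gT : finGroupType) (S : {group gT}) (F : fsys gT) (P : {group gT}) : Prop :=
  forall f, F P f -> 'C_S(f @: P) \subset f @: P.

Local Open Scope ring_scope.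

(* A transitive (B,A)-biset (B x A)/L is recorded as the triple (B, A, L),
   L a canonical representative of its (B x A)-conjugacy class.          *)
Definition btype (gT : finGroupType) :=
  ({group gT} * {group gT} * {group (gT * gT)})%type.

Definition diagm (gT : finGroupType) (C : {set gT}) (f : gT -> gT) : {set gT * gT} :=
  [set (f c, c) | c in C].

Definition canon (gT : finGroupType) (B A : {set gT}) (L : {group (gT * gT)}) :
    {group (gT * gT)} :=
  [arg min_(M < L | [exists x in setX B A, M == (L :^ x)%G]) enum_rank M].

(* basis elements of mu(E), E a fusion system over the group E0:
   classes of I^B_{psi(C)} c_psi R^A_C *)
Definition is_basis (gT : finGroupType) (E : fsys gT) (E0 : {group gT}) (t : btype gT) : Prop :=
  let: (B, A, L) := t in
  [/\ B \subset E0, A \subset E0, L = canon B A L &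
      exists (C : {group gT}) f,
        [/\ C \subset A, E C f, f @: C \subset B & L = diagm C f :> {set _}]].

(* R (x) (Grothendieck group): R-valued coefficient functions on classes *)
Notation mu gT R := {ffun btype gT -> R} (only parsing).

Definition in_mu (gT : finGroupType) (R : pzRingType) (E : fsys gT) (E0 : {group gT})
    (x : mu gT R) : Prop :=
  forall t, x t != 0 -> is_basis E E0 t.

Definition bvec (gT : finGroupType) (R : pzRingType) (t : btype gT) : mu gT R :=
  [ffun u => (u == t)%:R].

Definition bcls (gT : finGroupType) (R : pzRingType) (B A : {group gT})
    (L : {group (gT * gT)}) : mu gT R :=
  bvec R (B, A, canon B A L).

Definition Iaa (gT : finGroupType) (R : pzRingType) (A : {group gT}) : mu gT R :=
  bcls R A A [group of <<diagm A id>>].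

Definition unitmu (gT : finGroupType) (R : pzRingType) (E0 : {group gT}) : mu gT R :=
  \sum_(A : {group gT} | A \subset E0) Iaa R A.

Definition bstar (gT : finGroupType) (L M : {set gT * gT}) : {set gT * gT} :=
  [set u | [exists j, ((u.1, j) \in L) && ((j, u.2) \in M)]].
Definition pr1s (gT : finGroupType) (L : {set gT * gT}) : {set gT} := [set u.1 | u in L].
Definition pr2s (gT : finGroupType) (L : {set gT * gT}) : {set gT} := [set u.2 | u in L].

(* product of basis bisets (Mackey formula):
   (B x J)/L  x_J  (J x A)/M = sum_{t in p2(L)\J/p1(M)} (B x A)/(L * ^(t,1)M) *)
Definition mulb (gT : finGroupType) (R : pzRingType) (t u : btype gT) : mu gT R :=
  let: (B, J, L) := t in
  let: (J', A, M) := u in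
  if J == J' then
    \sum_(D in [set ((pr2s L :* j) * pr1s M)%g | j in J])
        bcls R B A [group of <<bstar L (M :^ (((repr D)^-1, 1) : gT * gT))%g>>]
  else 0.

Definition mulmu (gT : finGroupType) (R : pzRingType) (x y : mu gT R) : mu gT R :=
  \sum_(t : btype gT) \sum_(u : btype gT) [ffun v => x t * y u * mulb R t u v].

(* ---- Mackey functors = f.g. left mu_R(E)-modules ------------------- *)
Definition mack_module (gT : finGroupType) (R : pzRingType) (E : fsys gT) (E0 : {group gT})
    (M : zmodType) (act : mu gT R -> M -> M) : Prop :=
  [/\ (forall x y m, in_mu E E0 x -> in_mu E E0 y -> act (x + y) m = act x m + act y m),
      (forall x m m', in_mu E E0 x -> act x (m + m') = act x m + act x m'),
      (forall m, act (unitmu R E0) m = m),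
      (forall x y m, in_mu E E0 x -> in_mu E E0 y -> act (mulmu x y) m = act x (act y m)) &
      (exists n (g : 'I_n -> M), forall m, exists c : 'I_n -> mu gT R,
          (forall i, in_mu E E0 (c i)) /\ m = \sum_(i < n) act (c i) (g i))].

Definition mcentric (gT : finGroupType) (R : pzRingType) (S : {group gT}) (F : fsys gT)
    (E0 : {group gT}) (M : zmodType) (act : mu gT R -> M -> M) : Prop :=
  forall A : {group gT}, A \subset E0 -> ~ centric S F A -> forall m, act (Iaa R A) m = 0.

(* ---- induction: mu(K) 1_H (x)_{mu(H)} N, by its universal property -- *)
Definition in_mu1 (gT : finGroupType) (R : pzRingType) (FK : fsys gT) (K H : {group gT})
    (y : mu gT R) : Prop :=
  in_mu FK K y /\ exists x, in_mu FK K x /\ y = mulmu x (unitmu R H).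

Definition balanced (gT : finGroupType) (R : pzRingType) (FK FH : fsys gT) (K H : {group gT})
    (N : zmodType) (actN : mu gT R -> N -> N) (U : zmodType) (g : mu gT R -> N -> U) : Prop :=
  [/\ (forall y y' n, in_mu1 FK K H y -> in_mu1 FK K H y' -> g (y + y') n = g y n + g y' n),
      (forall y n n', in_mu1 FK K H y -> g y (n + n') = g y n + g y n') &
      (forall y z n, in_mu1 FK K H y -> in_mu FH H z -> g (mulmu y z) n = g y (actN z n))].

Definition is_tensor (gT : finGroupType) (R : pzRingType) (FK FH : fsys gT) (K H : {group gT})
    (N : zmodType) (actN : mu gT R -> N -> N) (T : zmodType) (beta : mu gT R -> N -> T) : Prop :=
  balanced FK FH K H actN beta /\
  forall (U : zmodType) (g : mu gT R -> N -> U), balanced FK FH K H actN g ->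
    exists h : T -> U,
      [/\ {morph h : a b / a + b},
          (forall y n, in_mu1 FK K H y -> h (beta y n) = g y n) &
          (forall h' : T -> U, {morph h' : a b / a + b} ->
             (forall y n, in_mu1 FK K H y -> h' (beta y n) = g y n) -> h' =1 h)].

Definition induced_act (gT : finGroupType) (R : pzRingType) (FK : fsys gT) (K H : {group gT})
    (N : zmodType) (T : zmodType) (beta : mu gT R -> N -> T) (actT : mu gT R -> T -> T) : Prop :=
  (forall x t t', in_mu FK K x -> actT x (t + t') = actT x t + actT x t') /\
  (forall x y n, in_mu FK K x -> in_mu1 FK K H y -> actT x (beta y n) = beta (mulmu x y) n).

Definition imgL (gT : finGroupType) (f : mor gT) (L : {set gT * gT}) : {group (gT * gT)} :=
  [group of <<[set ((f u.1, f u.2) : gT * gT) | u in L]>>].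

Definition transport (gT : finGroupType) (R : pzRingType) (f : mor gT) (x : mu gT R) : mu gT R :=
  \sum_(t : btype gT) [ffun v => x t * bcls R (img f t.1.1) (img f t.1.2) (imgL f t.2) v].

(* ^phi L : y . m := hat(phi)^{-1}(y) m, and hat(phi)^{-1} = hat(phi^{-1}) *)
Definition conj_act (gT : finGroupType) (R : pzRingType) (H : {group gT}) (phi : mor gT)
    (M : zmodType) (act : mu gT R -> M -> M) : mu gT R -> M -> M :=
  fun y m => act (transport (minv H phi) y) m.

From HB Require Import structures.
From mathcomp Require Import all_boot all_order all_algebra all_fingroup all_solvable.

(* Part (1) is immediate from H <= K.  For (3), transporting I^A_A along
   phi^-1 gives I^{A'}_{A'} with A' = phi^-1(A) <= H, and A' is not F-centric
   because A contains its image under the F-morphism phi, while overgroups of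
   F-centric subgroups are F-centric.  For (2), by the uniqueness in the
   universal property of mu(K)1_H (x) N it suffices that beta (I^A_A y) n = 0
   for y in mu(K)1_H.  Expanding y in the basis, every surviving term is a
   class (A x A')/Delta(C, f) with C <= A' <= H; it factors as
   [(A x C)/Delta(C, f)] * R^{A'}_C, where the right factor lies in mu(H) and
   is fixed by I^C_C, and C is not F-centric since f maps it into A.  So the
   right factor kills N. *)

Set Implicit Arguments. Unset Strict Implicit. Unset Printing Implicit Defensive.
Import GRing.Theory.
Local Open Scope group_scope.

Section Bisets.
Variable gT : finGroupType.
Implicit Types (B A C J : {group gT}) (L M : {group gT * gT}).

Lemma canon_conj B A L : exists2 x, x \in setX B A & canon B A L = (L :^ x)%G.
Proof.
rewrite /canon; case: arg_minnP => [|M /existsP[x /andP[Hx /eqP ->]] _]; last by exists x.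
by apply/existsP; exists 1; rewrite group1 /=; apply/eqP/val_inj; rewrite /= conjsg1.
Qed.

Lemma canonJ B A L x : x \in setX B A -> canon B A (L :^ x)%G = canon B A L.
Proof.
move=> Bx; have conjLM y : (L :^ (x * y))%G = ((L :^ x) :^ y)%G.
  by apply: val_inj; rewrite /= conjsgM.
have classE M : [exists y in setX B A, M == ((L :^ x) :^ y)%G]
              = [exists y in setX B A, M == (L :^ y)%G].
  apply/existsP/existsP => -[y /andP[By /eqP ->]].
    by exists (x * y); rewrite groupM //= conjLM eqxx.
  by exists (x^-1 * y); rewrite groupM ?groupV //= -conjLM mulKVg eqxx.
rewrite /canon; case: arg_minnP => [|M1 PM1 min1].
  by apply/existsP; exists 1; rewrite group1 /=; apply/eqP/val_inj; rewrite /= conjsg1.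
case: arg_minnP => [|M2 PM2 min2].
  by apply/existsP; exists 1; rewrite group1 /=; apply/eqP/val_inj; rewrite /= conjsg1.
apply: enum_rank_inj; apply: val_inj; apply/eqP; rewrite eqn_leq.
by rewrite min1 ?min2 ?classE // -classE.
Qed.

Lemma canon_id B A L : canon B A (canon B A L) = canon B A L.
Proof. by have [x Bx E] := canon_conj B A L; rewrite {1}E canonJ. Qed.

Lemma group_gen_conjG L y : [group of <<L :^ y>>]%G = (L :^ y)%G.
Proof. by apply: val_inj; rewrite /= genGid. Qed.

Lemma mem_conjg_pair (X : {set gT * gT}) x1 x2 y1 y2 :
  ((x1, x2) \in X :^ (y1, y2)) = ((x1 ^ y1^-1, x2 ^ y2^-1) \in X).
Proof. by rewrite mem_conjg. Qed.

Lemma mem_diagm (X : {set gT}) (f : gT -> gT) x z :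
  ((x, z) \in diagm X f) = (z \in X) && (x == f z).
Proof.
apply/imsetP/andP => [[c Hc [-> ->]] | [Hz /eqP ->]]; first by rewrite eqxx.
by exists z.
Qed.

Lemma pr1s_diagm (X : {set gT}) f : pr1s (diagm X f) = f @: X.
Proof.
apply/setP => x; apply/imsetP/imsetP => [[u /imsetP[c Hc ->] ->] | [c Hc ->]].
  by exists c.
by exists (f c, c) => //; apply/imsetP; exists c.
Qed.

Lemma pr2s_diagm (X : {set gT}) f : pr2s (diagm X f) = X.
Proof.
apply/setP => x; apply/imsetP/idP => [[u /imsetP[c Hc ->] ->] // | Hx].
by exists (f x, x) => //; apply/imsetP; exists x.
Qed.

Lemma diagm_id_group J : group_set (diagm J id).
Proof.
apply/group_setP; split; first by apply/imsetP; exists 1.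
move=> [x1 x2] [y1 y2]; rewrite !mem_diagm => /andP[H1 /eqP ->] /andP[H2 /eqP ->].
by rewrite /= groupM ?eqxx.
Qed.

Lemma gen_diagm_id J : <<diagm J id>> = diagm J id.
Proof. exact/gen_set_id/diagm_id_group. Qed.

Lemma diagm_idJ (X : {set gT}) y1 y2 :
  diagm X id :^ (y1, y2) = [set (e ^ y1, e ^ y2) | e in X].
Proof.
apply/setP => -[x z]; rewrite mem_conjg_pair mem_diagm; apply/andP/imsetP.
  case=> Hz /eqP E; exists (z ^ y2^-1) => //.
  by rewrite conjgKV -E conjgKV.
by case=> e He [-> ->]; rewrite !conjgK eqxx.
Qed.

Lemma pr1s_conj (X : {set gT * gT}) y : pr1s (X :^ y) = pr1s X :^ y.1.
Proof.
apply/setP => x; rewrite mem_conjg; apply/imsetP/imsetP => [[u Hu ->] | [w Hw Ex]].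
  by exists (u ^ y^-1); rewrite -?mem_conjg //; case: u y {Hu} => ? ? [? ?].
exists (w ^ y); first by rewrite memJ_conjg.
by case: w y Ex {Hw} => w1 w2 [y1 y2] /= <-; rewrite -conjgE conjgKV.
Qed.

Lemma pr2s_conj (X : {set gT * gT}) y : pr2s (X :^ y) = pr2s X :^ y.2.
Proof.
apply/setP => x; rewrite mem_conjg; apply/imsetP/imsetP => [[u Hu ->] | [w Hw Ex]].
  by exists (u ^ y^-1); rewrite -?mem_conjg //; case: u y {Hu} => ? ? [? ?].
exists (w ^ y); first by rewrite memJ_conjg.
by case: w y Ex {Hw} => w1 w2 [y1 y2] /= <-; rewrite -conjgE conjgKV.
Qed.

Lemma pr1s_group1 L : 1 \in pr1s L.
Proof. by apply/imsetP; exists 1. Qed.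

Lemma pr2s_group1 L : 1 \in pr2s L.
Proof. by apply/imsetP; exists 1. Qed.

Lemma bstar_diagm_idl J (X : {set gT * gT}) a b :
  b \in J -> pr1s X \subset J -> bstar (diagm J id :^ (a, b)) X = X :^ (b^-1 * a, 1).
Proof.
move=> Jb sXJ; apply/setP => -[x z].
rewrite inE mem_conjg_pair invg1 conjg1; apply/existsP/idP => /=.
  case=> j /andP[]; rewrite mem_conjg_pair mem_diagm => /andP[Jj /eqP E] Xjz.
  by rewrite invMg invgK conjgM E -conjgM mulVg conjg1.
move=> Xxz; exists (x ^ (b^-1 * a)^-1); rewrite Xxz andbT mem_conjg_pair mem_diagm /=.
have Jx : x ^ (b^-1 * a)^-1 \in J.
  by apply: (subsetP sXJ); apply/imsetP; exists (x ^ (b^-1 * a)^-1, z).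
by rewrite groupJ ?groupV // -conjgM invMg invgK mulgK eqxx.
Qed.

Lemma bstar_diagm_idr J (X : {set gT * gT}) a b :
  a \in J -> pr2s X \subset J -> bstar X (diagm J id :^ (a, b)) = X :^ (1, a^-1 * b).
Proof.
move=> Ja sXJ; apply/setP => -[x z].
rewrite inE mem_conjg_pair invg1 conjg1; apply/existsP/idP => /=.
  case=> j /andP[Xxj]; rewrite mem_conjg_pair mem_diagm => /andP[Jj /eqP E].
  by rewrite invMg invgK conjgM -E -conjgM mulVg conjg1.
move=> Xxz; exists (z ^ (a^-1 * b)^-1); rewrite Xxz mem_conjg_pair mem_diagm /=.
have Jz : z ^ (a^-1 * b)^-1 \in J.
  by apply: (subsetP sXJ); apply/imsetP; exists (x, z ^ (a^-1 * b)^-1).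
have -> : z ^ b^-1 = (z ^ (a^-1 * b)^-1) ^ a^-1 by rewrite -conjgM invMg invgK mulgK.
by rewrite groupJ ?groupV ?eqxx.
Qed.

Lemma mul_rcoset_full J (X Y : {set gT}) j :
  X \subset J -> Y \subset J -> 1 \in X -> 1 \in Y -> j \in J ->
  X = J \/ Y = J -> X :* j * Y = J.
Proof.
move=> sXJ sYJ X1 Y1 Jj [-> | EY].
  by rewrite rcoset_id //; apply/eqP; rewrite eqEsubset mul_subG ?mulg_subl.
apply/eqP; rewrite eqEsubset mul_subG //=; last first.
  apply/subsetP => x /rcosetP[x' Xx' ->]; by rewrite groupM // (subsetP sXJ).
apply/subsetP => g Jg; rewrite -(mulKVg j g).
by rewrite mem_mulg ?EY ?groupM ?groupV // mem_rcoset mulgV.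
Qed.

(* The class of (B x A)/Delta(B), i.e. R^A_B when B <= A; [Iaa R A] is
   [bvec R (res_class A A)]. *)
Definition res_class B A : btype gT :=
  (B, A, canon B A [group of <<diagm B id>>]%G).

Lemma canon_res_class B A :
  exists a b, [/\ a \in B, b \in A & (res_class B A).2 = diagm B id :^ (a, b) :> {set _}].
Proof.
rewrite /res_class /=.
have [[a b] /setXP[Ba Ab] ->] := canon_conj B A [group of <<diagm B id>>]%G.
by exists a, b; rewrite /= gen_diagm_id.
Qed.

Lemma pr1s_res_class B A : pr1s (res_class B A).2 = B.
Proof.
have [a [b [Ba _ ->]]] := canon_res_class B A.
by rewrite pr1s_conj pr1s_diagm imset_id /= conjGid.
Qed.

Lemma pr2s_res_class_Iaa B : pr2s (res_class B B).2 = B.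
Proof.
have [a [b [_ Bb ->]]] := canon_res_class B B.
by rewrite pr2s_conj pr2s_diagm /= conjGid.
Qed.

End Bisets.

Lemma sum_neq0 (V : nmodType) (I : finType) (P : pred I) (F : I -> V) :
  (\sum_(i | P i) F i != 0)%R -> exists2 i, P i & (F i != 0)%R.
Proof.
move=> nz; have /existsP[i /andP[Pi Fi]] : [exists i, P i && (F i != 0)%R].
  apply: contraNT nz => /existsPn Fi0; rewrite big1 // => i Pi.
  by apply/eqP; move: (Fi0 i); rewrite Pi negbK.
by exists i.
Qed.

Section MackeyAlgebra.
Variables (gT : finGroupType) (R : comPzRingType).
Local Open Scope ring_scope.
Notation btT := (btype gT).
Notation muT := {ffun btT -> R}.
Implicit Types (x y : muT) (t u : btT).

Definition scalemu (c : R) x : muT := [ffun v => c * x v].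

Lemma scale0mu x : scalemu 0 x = 0.
Proof. by apply/ffunP => v; rewrite !ffunE mul0r. Qed.

Lemma scalemu0 c : scalemu c 0 = 0.
Proof. by apply/ffunP => v; rewrite !ffunE mulr0. Qed.

Lemma bvecE t u : bvec R t u = (u == t)%:R.
Proof. by rewrite ffunE. Qed.

Lemma mulmuE x y v : mulmu x y v = \sum_t \sum_u x t * y u * mulb R t u v.
Proof.
rewrite sum_ffunE; apply: eq_bigr => t _; rewrite sum_ffunE.
by apply: eq_bigr => u _; rewrite ffunE.
Qed.

Lemma mulmuDl x x' y : mulmu (x + x') y = mulmu x y + mulmu x' y.
Proof.
apply/ffunP => v; rewrite ffunE !mulmuE -big_split; apply: eq_bigr => t _.
by rewrite -big_split; apply: eq_bigr => u _; rewrite ffunE !mulrDl.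
Qed.

Lemma mulmuDr x y y' : mulmu x (y + y') = mulmu x y + mulmu x y'.
Proof.
apply/ffunP => v; rewrite ffunE !mulmuE -big_split; apply: eq_bigr => t _.
by rewrite -big_split; apply: eq_bigr => u _; rewrite ffunE mulrDr mulrDl.
Qed.

Lemma mulmu0l y : mulmu 0 y = 0.
Proof.
apply/ffunP => v; rewrite mulmuE ffunE big1 // => t _.
by apply: big1 => u _; rewrite ffunE !mul0r.
Qed.

Lemma mulmu0r x : mulmu x 0 = 0.
Proof.
apply/ffunP => v; rewrite mulmuE ffunE big1 // => t _.
by apply: big1 => u _; rewrite ffunE mulr0 mul0r.
Qed.

Lemma mulmu_scalel c x y : mulmu (scalemu c x) y = scalemu c (mulmu x y).
Proof.
apply/ffunP => v; rewrite ffunE !mulmuE mulr_sumr; apply: eq_bigr => t _.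
by rewrite mulr_sumr; apply: eq_bigr => u _; rewrite ffunE !mulrA.
Qed.

Lemma mulmu_sumr (I : finType) (P : pred I) x (Y : I -> muT) :
  mulmu x (\sum_(i | P i) Y i) = \sum_(i | P i) mulmu x (Y i).
Proof. exact: (big_morph (mulmu x) (mulmuDr x) (mulmu0r x)). Qed.

Lemma mulmu_bvecl t y : mulmu (bvec R t) y = \sum_u scalemu (y u) (mulb R t u).
Proof.
apply/ffunP => v; rewrite mulmuE sum_ffunE (bigD1 t) //= [X in _ + X]big1 ?addr0.
  by apply: eq_bigr => u _; rewrite !ffunE eqxx mul1r.
by move=> t' /negbTE t't; apply: big1 => u _; rewrite bvecE t't !mul0r.
Qed.

Lemma mulmu_bvec t u : mulmu (bvec R t) (bvec R u) = mulb R t u.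
Proof.
rewrite mulmu_bvecl (bigD1 u) //= [X in _ + X]big1 ?addr0.
  by apply/ffunP => v; rewrite ffunE bvecE eqxx mul1r.
by move=> w /negbTE wu; apply/ffunP => v; rewrite !ffunE wu mul0r.
Qed.

Lemma mulb_supp t w u : mulb R t w u != 0 -> u.1.2 = w.1.2.
Proof.
case: t w => [[B J] L] [[J' A] M] /=; case: (J == J'); last by rewrite ffunE eqxx.
rewrite sum_ffunE => /sum_neq0[D _]; rewrite bvecE.
by case: (boolP (u == _)) => [/eqP -> // | _]; rewrite eqxx.
Qed.

Lemma mulb_one (B J A : {group gT}) (L M : {group gT * gT}) :
  (forall j, j \in J -> (pr2s L :* j * pr1s M)%g = J) ->
  mulb R (B, J, L) (J, A, M) = bcls R B A [group of <<bstar L M>>]%g.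
Proof.
move=> dcosetE; rewrite /mulb eqxx.
have -> : [set (pr2s L :* j * pr1s M)%g | j in J] = [set (J : {set gT})].
  apply/setP => D; rewrite inE; apply/imsetP/eqP => [[j Jj ->] | ->]; first exact: dcosetE.
  by exists 1%g; rewrite ?dcosetE.
by rewrite big_set1 repr_group invg1 conjsg1.
Qed.

Lemma mulb_Iaal (B A : {group gT}) (L : {group gT * gT}) : (pr1s L \subset B)%g ->
  mulb R (res_class B B) (B, A, L) = bvec R (B, A, canon B A L).
Proof.
move=> sLB; rewrite mulb_one => [|j Bj]; last first.
  by apply: mul_rcoset_full; rewrite ?pr2s_res_class_Iaa ?pr1s_group1 //; left.
have [a [b [Ba Bb E]]] := canon_res_class B B.
rewrite /bcls E bstar_diagm_idl // group_gen_conjG.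
by rewrite -[in RHS](canonJ L (x := (b^-1 * a, 1)%g)) //; apply/setXP; rewrite groupM ?groupV.
Qed.

Lemma mulb_resr (B J A : {group gT}) (L : {group gT * gT}) :
  (pr2s L \subset J)%g -> (J \subset A)%g ->
  mulb R (B, J, L) (res_class J A) = bvec R (B, A, canon B A L).
Proof.
move=> sLJ sJA; rewrite mulb_one => [|j Jj]; last first.
  by apply: mul_rcoset_full; rewrite ?pr1s_res_class ?pr2s_group1 //; right.
have [a [b [Ja Ab E]]] := canon_res_class J A.
rewrite /bcls E bstar_diagm_idr // group_gen_conjG.
rewrite -[in RHS](canonJ L (x := (1, a^-1 * b)%g)) //.
by apply/setXP; rewrite group1 groupM ?groupV // (subsetP sJA).
Qed.

Lemma mulmu_unitr (H B A : {group gT}) (L : {group gT * gT}) :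
  (A \subset H)%g -> (pr2s L \subset A)%g ->
  mulmu (bvec R (B, A, L)) (unitmu R H) = bvec R (B, A, canon B A L).
Proof.
move=> sAH sLA; rewrite /unitmu mulmu_sumr (bigD1 A) //= [X in _ + X]big1 ?addr0.
  by rewrite mulmu_bvec mulb_resr.
by move=> A' /andP[_ A'A]; rewrite mulmu_bvec /mulb eq_sym (negbTE A'A).
Qed.

Lemma mulmu_unitr_supp (H : {group gT}) x u :
  mulmu x (unitmu R H) u != 0 -> (u.1.2 \subset H)%g.
Proof.
rewrite mulmuE => /sum_neq0[t _ /sum_neq0[w _ nz]].
have /mulb_supp -> : mulb R t w u != 0 by apply: contraNneq nz => ->; rewrite mulr0.
have : unitmu R H w != 0 by apply: contraNneq nz => ->; rewrite mulr0 mul0r.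
rewrite sum_ffunE => /sum_neq0[A' sA'H]; rewrite bvecE.
by case: (boolP (w == _)) => [/eqP -> // | _]; rewrite eqxx.
Qed.

End MackeyAlgebra.

Section FusionSystems.
Variable gT : finGroupType.
Implicit Types (E F : fsys gT) (S P Q A B C : {group gT}) (f g : mor gT).

Lemma restrE (X : {set gT}) (h : gT -> gT) x : x \in X -> restr X h x = h x.
Proof. by move=> Xx; rewrite ffunE Xx. Qed.

Lemma eq_in_restr (X : {set gT}) (h1 h2 : gT -> gT) :
  {in X, h1 =1 h2} -> restr X h1 = restr X h2.
Proof. by move=> eqh; apply/ffunP => x; rewrite !ffunE; case: ifP => // /eqh. Qed.

Lemma cmapE (X : {set gT}) y x : x \in X -> cmap X y x = x ^ y^-1.
Proof. exact: restrE. Qed.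

Lemma cmap1E (X : {set gT}) x : x \in X -> cmap X 1 x = x.
Proof. by move=> Xx; rewrite cmapE // invg1 conjg1. Qed.

Lemma fs_restr E (E0 : {group gT}) P Q g :
  fusion_system E0 E -> E Q g -> P \subset Q -> E P (restr P g).
Proof.
move=> [is_morE fs_conj _ fs_comp] Eg sPQ.
have [sQE0 _ _ _ _] := is_morE _ _ Eg.
have incl : E P (cmap P 1) by apply: fs_conj; rewrite ?(subset_trans sPQ).
have sincl : cmap P 1 @: P \subset Q.
  by apply/subsetP => _ /imsetP[x Px ->]; rewrite cmap1E // (subsetP sPQ).
rewrite -(eq_in_restr (h1 := g \o cmap P 1)); first exact: fs_comp incl Eg sincl.
by move=> x Px /=; rewrite cmap1E.
Qed.

Lemma centric_sup S F C A f :
  fusion_system S F -> F C f -> f @: C \subset A -> centric S F C -> centric S F A.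
Proof.
move=> [_ _ _ fs_comp] Ff sfCA cC g Fg.
have := cC _ (fs_comp _ _ _ _ Ff Fg sfCA).
rewrite (eq_in_imset (restrE _)) imset_comp => sCgf.
apply: subset_trans (subset_trans _ sCgf) (imsetS _ sfCA).
exact/setIS/centS/imsetS.
Qed.

Lemma diagm_conj_fs E (E0 : {group gT}) A B C f a b :
  fusion_system E0 E -> E C f -> f @: C \subset B -> C \subset A -> A \subset E0 ->
  B \subset E0 -> a \in B -> b \in A ->
  exists C' f',
    [/\ C' \subset A, E C' f', f' @: C' \subset B & diagm C f :^ (a, b) = diagm C' f'].
Proof.
move=> FE Ef sfCB sCA sAE0 sBE0 Ba Ab; have [is_morE fs_conj _ fs_comp] := FE.
have E0b : b \in E0 := subsetP sAE0 b Ab.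
have E0a : a^-1 \in E0 by rewrite groupV (subsetP sBE0).
have Cb_conj x : (x \in C :^ b) = (x ^ b^-1 \in C) by rewrite mem_conjg.
pose f' := restr (C :^ b) (fun x => f (x ^ b^-1) ^ a).
have f'E x : x \in C :^ b -> f' x = f (x ^ b^-1) ^ a by exact: restrE.
have fCb x : x \in C :^ b -> f (x ^ b^-1) \in img f C.
  by rewrite Cb_conj => Cx; apply/mem_gen/imsetP; exists (x ^ b^-1).
exists (C :^ b)%G, f'; split.
- by rewrite sub_conjg conjGid ?groupV.
- have E1 : E (C :^ b)%G (cmap (C :^ b) b).
    by apply: fs_conj; rewrite ?sub_conjg ?conjGid ?groupV ?(subset_trans sCA).
  have sE1 : cmap (C :^ b) b @: (C :^ b) \subset C.
    by apply/subsetP => _ /imsetP[x Cbx ->]; rewrite cmapE // -Cb_conj.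
  have E2 := fs_comp _ _ _ _ E1 Ef sE1.
  have sE2 : restr (C :^ b) (f \o cmap (C :^ b) b) @: (C :^ b) \subset img f C.
    by apply/subsetP => _ /imsetP[x Cbx ->]; rewrite restrE //= cmapE // fCb.
  have sfCE0 : img f C \subset E0 by rewrite /img /= gen_subG (subset_trans sfCB).
  have E3 := fs_comp _ _ _ _ E2 (fs_conj (img f C) _ sfCE0 E0a) sE2.
  rewrite /f' -(eq_in_restr (h1 := cmap (img f C) a^-1 \o
                                    restr (C :^ b) (f \o cmap (C :^ b) b))) //.
  by move=> x Cbx /=; rewrite cmapE ?restrE //= ?cmapE ?invgK ?fCb.
- apply/subsetP => _ /imsetP[x Cbx ->]; rewrite f'E // groupJ //.
  by apply: (subsetP sfCB); apply/imsetP; exists (x ^ b^-1); rewrite -?Cb_conj.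
apply/setP => -[x z]; rewrite mem_conjg_pair !mem_diagm /= -Cb_conj.
case Cbz: (z \in C :^ b) => //=; rewrite f'E //.
by apply/eqP/eqP => [<- | ->]; rewrite ?conjgKV ?conjgK.
Qed.

Lemma is_basis_canon E (E0 : {group gT}) B A C (L : {group gT * gT}) f :
  fusion_system E0 E -> B \subset E0 -> A \subset E0 -> C \subset A -> E C f ->
  f @: C \subset B -> L = diagm C f :> {set _} -> is_basis E E0 (B, A, canon B A L).
Proof.
move=> FE sBE0 sAE0 sCA Ef sfCB EL; split; rewrite ?canon_id //.
have [[a b] /setXP[Ba Ab] ->] := canon_conj B A L.
have [C' [f' [sC'A Ef' sf'C'B E']]] := diagm_conj_fs FE Ef sfCB sCA sAE0 sBE0 Ba Ab.
by exists C', f'; rewrite /= EL.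
Qed.

Lemma is_basis_res_class E (E0 : {group gT}) C A :
  fusion_system E0 E -> C \subset A -> A \subset E0 -> is_basis E E0 (res_class C A).
Proof.
move=> FE sCA sAE0; have [_ fs_conj _ _] := FE; have sCE0 := subset_trans sCA sAE0.
apply: (is_basis_canon (C := C) (f := cmap C 1)) => //; first exact: fs_conj.
  by apply/subsetP => _ /imsetP[x Cx ->]; rewrite cmap1E.
by rewrite /= gen_diagm_id; apply: eq_in_imset => x Cx; rewrite cmap1E.
Qed.

End FusionSystems.

Section MackeySubspaces.
Variables (gT : finGroupType) (R : comPzRingType) (E : fsys gT) (E0 H : {group gT}).
Local Open Scope ring_scope.
Implicit Types (x y : mu gT R) (t : btype gT).

Lemma in_mu0 : in_mu E E0 (0 : mu gT R).
Proof. by move=> u; rewrite ffunE eqxx. Qed.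

Lemma in_muD x y : in_mu E E0 x -> in_mu E E0 y -> in_mu E E0 (x + y).
Proof.
move=> Ex Ey u; rewrite ffunE; have [xu0 | /Ex //] := eqVneq (x u) 0.
by rewrite xu0 add0r => /Ey.
Qed.

Lemma in_mu_scale c x : in_mu E E0 x -> in_mu E E0 (scalemu c x).
Proof.
move=> Ex u; rewrite ffunE => nz; apply: Ex.
by apply: contraNneq nz => ->; rewrite mulr0.
Qed.

Lemma in_mu_bvec t : is_basis E E0 t -> in_mu E E0 (bvec R t).
Proof.
by move=> Et u; rewrite bvecE; case: (boolP (u == t)) => [/eqP -> | _]; rewrite ?eqxx.
Qed.

Lemma in_mu_Iaa (A : {group gT}) :
  fusion_system E0 E -> (A \subset E0)%g -> in_mu E E0 (Iaa R A).
Proof. by move=> FE sAE0; apply/in_mu_bvec/is_basis_res_class. Qed.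

Lemma in_mu1_0 : in_mu1 E E0 H (0 : mu gT R).
Proof. by split; [exact: in_mu0 | exists 0; rewrite mulmu0l; split; [exact: in_mu0|]]. Qed.

Lemma in_mu1D x y : in_mu1 E E0 H x -> in_mu1 E E0 H y -> in_mu1 E E0 H (x + y).
Proof.
move=> [Ex [x' [Ex' xE]]] [Ey [y' [Ey' yE]]]; split; first exact: in_muD.
by exists (x' + y'); rewrite mulmuDl -xE -yE; split; first exact: in_muD.
Qed.

Lemma in_mu1_basis t c :
  is_basis E E0 t -> (t.1.2 \subset H)%g -> in_mu1 E E0 H (scalemu c (bvec R t)).
Proof.
case: t => [[B A] L] Et sAH; split; first exact/in_mu_scale/in_mu_bvec.
exists (scalemu c (bvec R (B, A, L))); split; first exact/in_mu_scale/in_mu_bvec.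
have [_ _ canonL [C [f [sCA _ _ EL]]]] := Et.
by rewrite mulmu_scalel mulmu_unitr -?canonL // EL pr2s_diagm.
Qed.

End MackeySubspaces.

Section Induction.
Variables (gT : finGroupType) (R : comPzRingType) (S H K : {group gT}) (F FH FK : fsys gT).
Hypotheses (FS : fusion_system S F) (sHK : H \subset K) (FHs : fusion_system H FH)
  (FKs : fusion_system K FK) (sFKF : subfs FK F).
Variables (N : zmodType) (actN : mu gT R -> N -> N) (T : zmodType) (beta : mu gT R -> N -> T).
Hypotheses (MN : mack_module FH H actN) (CN : mcentric S F H actN)
  (BAL : balanced FK FH K H actN beta).
Local Open Scope ring_scope.

Lemma balanced0l n : beta 0 n = 0.
Proof.
have [betaDl _ _] := BAL; apply/(addrI (beta 0 n)).
by rewrite -betaDl ?addr0 //; exact: in_mu1_0.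
Qed.

Lemma balanced0r y : in_mu1 FK K H y -> beta y 0 = 0.
Proof.
have [_ betaDr _] := BAL => Ey; apply/(addrI (beta y 0)).
by rewrite -betaDr ?addr0.
Qed.

Lemma balanced_basis_vanish (A A' : {group gT}) (L : {group gT * gT}) c n :
  ~ centric S F A -> is_basis FK K (A, A', L) -> (A' \subset H)%g ->
  beta (scalemu c (bvec R (A, A', L))) n = 0.
Proof.
move=> nA EL sA'H; have [sAK _ canonL [C [f [sCA' FKf sfCA LE]]]] := EL.
have sCH := subset_trans sCA' sA'H.
pose v := (A, C, canon A C L).
have Ev : is_basis FK K v.
  exact: is_basis_canon FKs sAK (subset_trans sCH sHK) (subxx C) FKf sfCA LE.
have [[a c'] /setXP[Aa Cc'] vLE] := canon_conj A C L.
have factor : mulmu (scalemu c (bvec R v)) (bvec R (res_class C A')) =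
              scalemu c (bvec R (A, A', L)).
  rewrite mulmu_scalel mulmu_bvec mulb_resr //.
    by rewrite vLE canonJ -?canonL // inE Aa (subsetP sCA').
  by rewrite vLE pr2s_conj LE pr2s_diagm /= conjGid.
have idem : mulmu (Iaa R C) (bvec R (res_class C A')) = bvec R (res_class C A').
  by rewrite mulmu_bvec mulb_Iaal ?pr1s_res_class // canon_id.
have nC : ~ centric S F C by move=> cC; apply/nA/(centric_sup FS (sFKF FKf) sfCA).
have ERes := is_basis_res_class FHs sCA' sA'H.
have act0 : actN (bvec R (res_class C A')) n = 0.
  have [_ _ _ actM _] := MN.
  rewrite -[X in actN X]idem actM ?CN ?(subset_trans sCH) //.
    exact: in_mu_Iaa.
  exact: in_mu_bvec.
have Ev1 : in_mu1 FK K H (scalemu c (bvec R v)) by exact: in_mu1_basis.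
have [_ _ betaM] := BAL.
by rewrite -factor betaM // ?act0 ?balanced0r //; exact: in_mu_bvec.
Qed.

Lemma balanced_Iaa_vanish (A : {group gT}) y n :
  ~ centric S F A -> in_mu1 FK K H y -> beta (mulmu (Iaa R A) y) n = 0.
Proof.
move=> nA [Ey [x [_ yE]]].
pose P w := in_mu1 FK K H w /\ beta w n = 0.
have P0 : P 0 by split; [exact: in_mu1_0 | exact: balanced0l].
suff [] : P (\sum_u scalemu (y u) (mulb R (res_class A A) u)) by rewrite mulmu_bvecl.
apply: big_ind => // [w1 w2 [Ew1 bw1] [Ew2 bw2] | [[B A'] L] _].
  have [betaDl _ _] := BAL; split; first exact: in_mu1D.
  by rewrite betaDl // bw1 bw2 addr0.
have [-> | nz] := eqVneq (y (B, A', L)) 0; first by rewrite scale0mu.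
have [eqAB | neqAB] := eqVneq A B; last by rewrite /mulb /= (negbTE neqAB) scalemu0.
subst B; have Eu := Ey _ nz; have [_ _ canonL [C [f [_ _ sfCA LE]]]] := Eu.
have sA'H : (A' \subset H)%g by move: nz; rewrite yE => /mulmu_unitr_supp.
rewrite mulb_Iaal -?canonL; last by rewrite LE pr1s_diagm.
by split; [exact: in_mu1_basis | exact: balanced_basis_vanish].
Qed.

Lemma mcentric_induced (actT : mu gT R -> T -> T) :
  is_tensor FK FH K H actN beta -> induced_act FK K H beta actT -> mcentric S F K actT.
Proof.
move=> [_ univ] [actTD actT_beta] A sAK nA t.
have bal0 : balanced FK FH K H actN (fun _ _ => 0 : T) by split=> *; rewrite ?addr0.
have [h [_ _ h_uniq]] := univ T _ bal0.
have EA : in_mu FK K (Iaa R A) := in_mu_Iaa FKs sAK.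
have hA : actT (Iaa R A) =1 h.
  apply: h_uniq => [a b | y m Ey]; first exact: actTD.
  by rewrite actT_beta // balanced_Iaa_vanish.
have h0 : (fun=> 0) =1 h by apply: h_uniq => // a b; rewrite addr0.
by rewrite hA -h0.
Qed.

End Induction.

Section Conjugation.
Variables (gT : finGroupType) (R : comPzRingType).
Local Open Scope ring_scope.
Implicit Types (S H A : {group gT}) (F : fsys gT) (f phi : mor gT).

Lemma minvK (X : {set gT}) phi : {in X &, injective phi} -> {in X, cancel phi (minv X phi)}.
Proof.
move=> phi_inj x Xx; rewrite restrE; last exact: imset_f.
by case: pickP => [x' /andP[Xx' /eqP /phi_inj ->] | /(_ x)] //=; rewrite Xx eqxx.
Qed.

Lemma img_morphE f A : {in A &, {morph f : x y / (x * y)%g}} -> img f A = f @: A :> {set gT}.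
Proof.
move=> fM; rewrite /= gen_set_id //.
by have := morphim_groupset (Morphism fM) A; rewrite morphimEdom.
Qed.

Lemma transport_Iaa f A :
  {in A &, {morph f : x y / (x * y)%g}} -> transport f (Iaa R A) = Iaa R (img f A).
Proof.
move=> fM; have fJ : {in A &, {morph f : x y / (x ^ y)%g}} := morphJ (Morphism fM).
have [a [b [Aa Ab E]]] := canon_res_class A A.
have fAa : f a \in img f A by apply/mem_gen/imset_f.
have fAb : f b \in img f A by apply/mem_gen/imset_f.
have imgLE : imgL f (res_class A A).2 = ([group of <<diagm (img f A) id>>] :^ (f a, f b))%G.
  apply: val_inj; rewrite /= -genJ; congr <<_>>.
  rewrite E img_morphE // !diagm_idJ -!imset_comp.
  by apply: eq_in_imset => e Ae /=; rewrite !fJ.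
apply/ffunP => v; rewrite sum_ffunE (bigD1 (res_class A A)) //= big1 ?addr0.
  by rewrite !ffunE eqxx mul1r imgLE canonJ // inE fAa.
by move=> t /negbTE tA; rewrite !ffunE tA mul0r.
Qed.

Lemma mcentric_conj S H F phi (L : zmodType) (actL : mu gT R -> L -> L) :
  fusion_system S F -> F H phi -> mcentric S F H actL ->
  mcentric S F (img phi H) (conj_act H phi actL).
Proof.
move=> FS Fphi CL A sAphiH nA m; rewrite /conj_act.
have [is_morF _ _ _] := FS; have [_ _ phiM phi_inj _] := is_morF _ _ Fphi.
pose f := minv H phi.
have fK : {in H, cancel phi f} := minvK phi_inj.
have preA y : y \in A -> exists2 x, x \in H & y = phi x.
  by move=> Ay; apply/imsetP; rewrite -img_morphE // (subsetP sAphiH).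
have fM : {in A &, {morph f : x y / (x * y)%g}}.
  move=> _ _ /preA[x1 Hx1 ->] /preA[x2 Hx2 ->].
  by rewrite -phiM // !fK ?groupM.
have sfAH : img f A \subset H.
  by rewrite img_morphE //; apply/subsetP => _ /imsetP[_ /preA[x Hx ->] ->]; rewrite fK.
rewrite transport_Iaa //; apply: CL => // cfA; apply: nA.
apply: centric_sup FS (fs_restr FS Fphi sfAH) _ cfA.
rewrite (eq_in_imset (restrE _)) img_morphE // -imset_comp.
apply/subsetP => _ /imsetP[y Ay ->] /=; have [x Hx yE] := preA y Ay.
by rewrite yE fK // -yE.
Qed.

End Conjugation.

Theorem proposition2p30 (gT : finGroupType) (p : nat) (S : {group gT}) (F : fsys gT)
    (R : comPzRingType) (H K : {group gT}) (FH FK : fsys gT) :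
  prime p -> p.-group S -> fusion_system S F -> saturated p S F ->
  H \subset K -> K \subset S -> fusion_system H FH -> fusion_system K FK ->
  subfs FH FK -> subfs FK F ->
  [/\ (* (1) restriction *)
      (forall (M : zmodType) (act : mu gT R -> M -> M),
         mack_module FK K act -> mcentric S F K act ->
         forall A : {group gT}, A \subset H -> ~ centric S F A ->
         forall m, act (Iaa R A) (act (unitmu R H) m) = 0%R),
      (* (2) induction *)
      (forall (N : zmodType) (actN : mu gT R -> N -> N) (T : zmodType)
              (beta : mu gT R -> N -> T) (actT : mu gT R -> T -> T),
         mack_module FH H actN -> mcentric S F H actN ->
         is_tensor FK FH K H actN beta -> induced_act FK K H beta actT ->
         mcentric S F K actT) &
      (* (3) conjugation *)
      (forall (phi : mor gT) (L : zmodType) (actL : mu gT R -> L -> L),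
         F H phi -> mack_module (group_fs H) H actL -> mcentric S F H actL ->
         mcentric S F (img phi H) (conj_act H phi actL))].
Proof.
move=> _ _ FS _ sHK _ FHs FKs _ sFKF; split.
- by move=> M act _ CM A sAH nA m; exact: CM (subset_trans sAH sHK) nA _.
- move=> N actN T beta actT MN CN tensor ind.
  have [bal _] := tensor.
  exact: (mcentric_induced FS sHK FHs FKs sFKF MN CN bal tensor ind).
- by move=> phi L actL Fphi _; apply: mcentric_conj FS Fphi.
Qed.
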